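(* (i) A graph $G$ is $2$-$\chi_\rho$-critical if and only if $G \cong K_2$. (ii) A graph $G$ is $3$-$\chi_\rho$-critical if and only if $G \in \{C_3, P_4\}$ (up to isomorphism).
   Context: Graphs are finite and simple. A $k$-packing coloring of $G$ is a map $c:V(G)\to\{1,\ldots,k\}$ such that two distinct vertices $u,v$ with $c(u)=c(v)=i$ satisfy $d_G(u,v)>i$ (distance between vertices in different components is infinite); $\chi_\rho(G)$ is the smallest $k$ for which such a coloring exists. $G$ is $\chi_\rho$-critical if $\chi_\rho(H)<\chi_\rho(G)$ for every proper subgraph $H$ of $G$, and $k$-$\chi_\rho$-critical if moreover $\chi_\rho(G)=k$. $C_n$ is the cycle and $P_n$ the path on $n$ vertices. *)

From mathcomp Require Import all_boot.
Set Implicit Arguments. Unset Strict Implicit. Unset Printing Implicit Defensive.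

(* A (sub)graph is given by a vertex set V : {set T} and an edge relation
   E : rel T on a finite type T (edges are only meaningful inside V). *)

Fixpoint dist_le (T : finType) (V : {set T}) (E : rel T) (k : nat) (u v : T)
  : bool :=
  if k is k'.+1 then
    dist_le V E k' u v || [exists w in V, E u w && dist_le V E k' w v]
  else u == v.

(* c : {ffun T -> 'I_k}; vertex x receives colour (c x).+1 in {1,...,k}.
   Two distinct vertices u v of V with the same colour i must satisfy
   d(u,v) > i. *)
Definition is_packing_col (T : finType) (V : {set T}) (E : rel T) (k : nat)
  (c : {ffun T -> 'I_k}) : bool :=
  [forall u, forall v,
     [&& u \in V, v \in V, u != v & c u == c v] ==>
       ~~ dist_le V E (c u).+1 u v].

Definition packing_colorable (T : finType) (V : {set T}) (E : rel T) (k : nat)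
  : bool := [exists c : {ffun T -> 'I_k}, is_packing_col V E c].

Lemma packing_colorable_card (T : finType) (V : {set T}) (E : rel T) :
  exists k, packing_colorable V E k.
Proof.
exists #|T|; apply/existsP; exists [ffun x => enum_rank x].
apply/forallP => u; apply/forallP => v; apply/implyP => /and4P [_ _ nuv].
by rewrite !ffunE => /eqP /enum_rank_inj euv; rewrite euv eqxx in nuv.
Qed.

Definition chi_rho (T : finType) (V : {set T}) (E : rel T) : nat :=
  ex_minn (packing_colorable_card V E).

Definition is_subgraph (T : finType) (e : rel T) (V' : {set T}) (E' : rel T)
  : Prop :=
  symmetric E' /\ (forall u v, E' u v -> [&& e u v, u \in V' & v \in V']).

Definition is_proper_subgraph (T : finType) (e : rel T) (V' : {set T})
  (E' : rel T) : Prop :=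
  is_subgraph e V' E' /\
  ((V' != setT) || [exists u, exists v, e u v && ~~ E' u v]).

Definition chi_critical (T : finType) (e : rel T) (k : nat) : Prop :=
  chi_rho setT e = k /\
  (forall (V' : {set T}) (E' : rel T),
      is_proper_subgraph e V' E' -> chi_rho V' E' < chi_rho setT e).

Definition graph_iso (T T' : finType) (e : rel T) (e' : rel T') : Prop :=
  exists f : T -> T', bijective f /\ (forall x y, e x y = e' (f x) (f y)).

Definition complete_rel (n : nat) : rel 'I_n := fun x y => x != y.
Definition path_rel (n : nat) : rel 'I_n :=
  fun x y => (x.+1 == y :> nat) || (y.+1 == x :> nat).
Definition cycle_rel (n : nat) : rel 'I_n :=
  fun x y => (x.+1 %% n == y :> nat) || (y.+1 %% n == x :> nat).
Arguments complete_rel n : clear implicits.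
Arguments path_rel n : clear implicits.
Arguments cycle_rel n : clear implicits.

From mathcomp Require Import all_boot zify.
From Stdlib Require Import Classical.
Set Implicit Arguments. Unset Strict Implicit. Unset Printing Implicit Defensive.

(* A graph without a triangle and without a (not necessarily induced) path on four
   vertices is a disjoint union of stars; colouring the centres 2 and the leaves 1 is
   a packing colouring, so such a graph has packing chromatic number at most 2.
   Conversely K_2, C_3 and P_4 need 2, 3 and 3 colours, and these numbers can only
   grow when passing to a graph containing a copy.  In a critical graph G, a subgraph
   with the same packing chromatic number is G itself, so G is K_2 when
   chi_rho(G) = 2 and C_3 or P_4 when chi_rho(G) = 3.  Conversely, K_2, C_3 and P_4
   are critical: an injective endomorphism of a finite graph is an automorphism, so a
   subgraph containing a copy of the whole graph is not proper, while C_3 contains no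
   P_4 (too few vertices) and P_4 no C_3 (it is bipartite). *)

Section PackingColourings.
Variable T : finType.
Implicit Types (V : {set T}) (E : rel T).

Lemma dist_le_mono V E k m u v :
  k <= m -> dist_le V E k u v -> dist_le V E m u v.
Proof.
elim: m => [|m IHm]; first by rewrite leqn0 => /eqP ->.
by rewrite leq_eqVlt => /predU1P [-> //|/IHm le_km /le_km /= ->].
Qed.

Lemma dist_le_edge V E u v : v \in V -> E u v -> dist_le V E 1 u v.
Proof. by move=> Vv Euv; apply/orP; right; apply/existsP; exists v; rewrite Vv Euv /=. Qed.

Lemma dist_le_edge2 V E u w v :
  w \in V -> v \in V -> E u w -> E w v -> dist_le V E 2 u v.
Proof.
move=> Vw Vv Euw Ewv; apply/orP; right; apply/existsP; exists w.
by rewrite Vw Euw; apply: dist_le_edge.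
Qed.

Lemma dist_le1P V E u v : dist_le V E 1 u v -> u = v \/ E u v.
Proof. by case/orP=> [/eqP|/existsP [w /and3P [_ Euw /eqP <-]]]; [left | right]. Qed.

Lemma dist_le2P V E u v : dist_le V E 2 u v ->
  [\/ u = v, E u v | exists2 w, w \in V & E u w && E w v].
Proof.
case/orP=> [/dist_le1P [] | /existsP [w /and3P [Vw Euw /dist_le1P [<- | Ewv]]]].
- by constructor 1.
- by constructor 2.
- by constructor 2.
- by constructor 3; exists w; rewrite ?Euw.
Qed.

Lemma dist_le_hom (S : finType) (r : rel S) (g : S -> T) V E k x y :
  (forall i, g i \in V) -> (forall i j, r i j -> E (g i) (g j)) ->
  dist_le [set: S] r k x y -> dist_le V E k (g x) (g y).
Proof.
move=> gV g_hom; elim: k x => [|k IHk] x /=; first by move/eqP->.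
case/orP=> [/IHk -> // | /existsP [w /and3P [_ /g_hom Egxw /IHk dwy]]].
by apply/orP; right; apply/existsP; exists (g w); rewrite gV Egxw.
Qed.

Lemma packing_colP V E k (c : {ffun T -> 'I_k}) :
  reflect (forall u v, u \in V -> v \in V -> u != v -> c u = c v ->
             ~~ dist_le V E (c u).+1 u v)
          (is_packing_col V E c).
Proof.
apply: (iffP forallP) => [c_ok u v Vu Vv nuv cuv | c_ok u].
  by have /forallP/(_ v)/implyP := c_ok u; apply; rewrite Vu Vv nuv cuv /=.
by apply/forallP=> v; apply/implyP=> /and4P [Vu Vv nuv /eqP]; apply: c_ok.
Qed.

Lemma packing_col_adj V E k (c : {ffun T -> 'I_k}) u v :
  is_packing_col V E c -> u \in V -> v \in V -> u != v -> E u v -> c u != c v.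
Proof.
move=> /packing_colP c_ok Vu Vv nuv Euv; apply/eqP=> cuv.
by have /negP[] := c_ok u v Vu Vv nuv cuv; apply: dist_le_mono (dist_le_edge Vv Euv).
Qed.

Lemma chi_rho_colorable V E : packing_colorable V E (chi_rho V E).
Proof. by rewrite /chi_rho; case: ex_minnP. Qed.

Lemma chi_rho_min V E k : packing_colorable V E k -> chi_rho V E <= k.
Proof. by rewrite /chi_rho; case: ex_minnP => m _; apply. Qed.

Lemma chi_rho_le_card V E : chi_rho V E <= #|T|.
Proof.
apply: chi_rho_min; apply/existsP; exists [ffun x => enum_rank x].
apply/packing_colP=> u v _ _ nuv; rewrite !ffunE => /enum_rank_inj euv.
by rewrite euv eqxx in nuv.
Qed.

End PackingColourings.

Definition has_copy (S T : finType) (r : rel S) (V : {set T}) (E : rel T) :=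
  exists g : S -> T,
    [/\ injective g, forall i, g i \in V & forall i j, r i j -> E (g i) (g j)].

Section Copies.
Variables (S T : finType) (r : rel S).
Implicit Types (V : {set T}) (E : rel T) (e : rel T).

Lemma chi_rho_copy V E : has_copy r V E -> chi_rho [set: S] r <= chi_rho V E.
Proof.
case=> g [g_inj gV g_hom].
have /existsP [c /packing_colP c_ok] := chi_rho_colorable V E.
apply: chi_rho_min; apply/existsP; exists [ffun i => c (g i)].
apply/packing_colP=> i j _ _ nij; rewrite !ffunE => cij.
apply: contra (c_ok _ _ (gV i) (gV j) _ cij); first exact: dist_le_hom.
by rewrite (inj_eq g_inj).
Qed.

Lemma graph_iso_copy e : graph_iso e r -> has_copy e [set: S] r.
Proof. by case=> f [/bij_inj f_inj e_f]; exists f; split=> // x y; rewrite e_f. Qed.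

Lemma graph_iso_sym e : graph_iso e r -> graph_iso r e.
Proof.
case=> f [[g fK gK] e_f]; exists g; split; first by exists f.
by move=> i j; rewrite e_f !gK.
Qed.

Lemma has_copy_subgraph_iso (R : finType) (q : rel R) e V' E' :
  is_subgraph e V' E' -> graph_iso e r -> has_copy q V' E' -> has_copy q [set: S] r.
Proof.
move=> [_ E'e] [f [/bij_inj f_inj e_f]] [g [g_inj _ g_hom]].
exists (f \o g); split=> [|//|i j /g_hom/E'e/and3P [+ _ _]]; last by rewrite e_f.
exact: inj_comp.
Qed.

End Copies.

Lemma graph_iso_chi_rho (S T : finType) (r : rel S) (e : rel T) :
  graph_iso e r -> chi_rho [set: T] e = chi_rho [set: S] r.
Proof.
move=> iso; apply/eqP; rewrite eqn_leq.
by rewrite !chi_rho_copy //; apply: graph_iso_copy => //; apply: graph_iso_sym.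
Qed.

(* The injective map [p x p] sends the finite edge set of [r] into itself, hence onto it. *)
Lemma inj_hom_reflect (S : finType) (r : rel S) (p : S -> S) :
  injective p -> (forall i j, r i j -> r (p i) (p j)) ->
  forall i j, r (p i) (p j) -> r i j.
Proof.
move=> p_inj p_hom i j r_pij.
pose A := [set ij : S * S | r ij.1 ij.2].
pose pp (ij : S * S) := (p ij.1, p ij.2).
have pp_inj : injective pp by move=> [? ?] [? ?] [/p_inj -> /p_inj ->].
have ppA : pp @: A = A.
  apply/eqP; rewrite eqEcard card_imset // leqnn andbT.
  by apply/subsetP=> x /imsetP [[a b]]; rewrite !inE => /p_hom rab ->.
by have := mem_imset A (i, j) pp_inj; rewrite ppA !inE => <-.
Qed.

Lemma not_proper_subgraph (T : finType) (e : rel T) V' E' :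
  V' = setT -> subrel e E' -> ~ is_proper_subgraph e V' E'.
Proof.
move=> -> eE' [_]; rewrite eqxx /= => /existsP [u /existsP [v /andP [euv]]].
by rewrite eE'.
Qed.

Lemma copy_spanning (S T : finType) (r : rel S) (e : rel T) V' E' :
  graph_iso e r -> has_copy r V' E' -> ~ is_proper_subgraph e V' E'.
Proof.
move=> [f [f_bij e_f]] [g [g_inj gV' g_hom]] proper.
have [_ E'e] := proper.1.
have fg_inj : injective (f \o g) := inj_comp (bij_inj f_bij) g_inj.
have fg_hom i j : r i j -> r (f (g i)) (f (g j)).
  by move/g_hom/E'e/and3P=> [+ _ _]; rewrite e_f.
have [h fgK hK] := injF_bij fg_inj.
have g_onto t : g (h (f t)) = t by apply: (bij_inj f_bij); exact: hK.
apply: not_proper_subgraph proper.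
  by apply/setP=> t; rewrite inE -(g_onto t) gV'.
move=> x y; rewrite -(g_onto x) -(g_onto y) e_f => /(inj_hom_reflect fg_inj fg_hom).
exact: g_hom.
Qed.

Lemma critical_subgraph_full (T : finType) (e : rel T) k V' E' :
  chi_critical e k -> is_subgraph e V' E' -> k <= chi_rho V' E' ->
  V' = setT /\ subrel e E'.
Proof.
move=> [<- crit] sub le_k.
have [missing | ] := boolP ((V' != setT) || [exists u, exists v, e u v && ~~ E' u v]).
  by have := crit V' E' (conj sub missing); rewrite ltnNge le_k.
rewrite negb_or negbK => /andP [/eqP -> /existsPn none]; split=> // u v euv.
by have /existsPn/(_ v) := none u; rewrite euv /= negbK.
Qed.

Lemma critical_copy_iso (S T : finType) (r : rel S) (e : rel T) k :
  chi_critical e k -> k <= chi_rho [set: S] r -> symmetric r ->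
  has_copy r [set: T] e -> graph_iso e r.
Proof.
move=> crit le_k r_sym [g [g_inj _ g_hom]].
pose E' u v := [exists i, exists j, [&& g i == u, g j == v & r i j]].
have E'_g i j : E' (g i) (g j) = r i j.
  apply/existsP/idP=> [[i' /existsP [j' /and3P [/eqP/g_inj -> /eqP/g_inj ->]]] // | rij].
  by exists i; apply/existsP; exists j; rewrite !eqxx.
have sub : is_subgraph e (g @: setT) E'.
  split=> [u v | _ _ /existsP [i /existsP [j /and3P [/eqP <- /eqP <- /g_hom ->]]]].
    by apply/existsP/existsP=> -[i /existsP [j]]; exists j; apply/existsP; exists i;
      rewrite r_sym andbCA.
  by rewrite !imset_f.
have copy : has_copy r (g @: setT) E'.
  by exists g; split=> // [i | i j]; rewrite ?imset_f ?E'_g.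
have [gT eE'] := critical_subgraph_full crit sub (leq_trans le_k (chi_rho_copy copy)).
have [f gK fK] : bijective g.
  by apply: (inj_card_bij g_inj); rewrite -cardsT -gT card_imset // cardsT.
exists f; split=> [|x y]; first by exists g.
rewrite -E'_g !fK; apply/idP/idP=> [/eE' // | ].
by case: sub => _ /[apply] /and3P [].
Qed.

Lemma graph_iso_critical (S T : finType) (r : rel S) (e : rel T) :
  graph_iso e r ->
  (forall V' E', is_subgraph e V' E' -> ~ has_copy r V' E' ->
     chi_rho V' E' < chi_rho [set: S] r) ->
  chi_critical e (chi_rho [set: S] r).
Proof.
move=> iso bound; rewrite /chi_critical (graph_iso_chi_rho iso); split=> // V' E' proper.
by apply: bound => [|copy]; [case: proper | exact: copy_spanning iso copy proper].
Qed.

Lemma complete_rel_sym n : symmetric (complete_rel n).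
Proof. by move=> i j; rewrite /complete_rel eq_sym. Qed.

Lemma cycle_rel_sym n : symmetric (cycle_rel n).
Proof. by move=> i j; rewrite /cycle_rel orbC. Qed.

Lemma path_rel_sym n : symmetric (path_rel n).
Proof. by move=> i j; rewrite /path_rel orbC. Qed.

Lemma chi_rho_complete n : chi_rho [set: 'I_n] (complete_rel n) = n.
Proof.
apply/eqP; rewrite eqn_leq (leq_trans (chi_rho_le_card _ _)) ?card_ord //=.
have /existsP [c c_ok] := chi_rho_colorable [set: 'I_n] (complete_rel n).
have c_inj : injective c.
  move=> i j; apply: contra_eq => ne_ij.
  by apply: (packing_col_adj c_ok _ _ ne_ij ne_ij); rewrite inE.
by have := leq_card _ c_inj; rewrite !card_ord.
Qed.

Lemma chi_rho_cycle3 : chi_rho [set: 'I_3] (cycle_rel 3) = 3.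
Proof.
apply/eqP; rewrite eqn_leq (leq_trans (chi_rho_le_card _ _)) ?card_ord //=.
rewrite -{1}(chi_rho_complete 3); apply: chi_rho_copy; exists id; split=> // i j.
by case: i j => [[|[|[|//]]] ?] [[|[|[|//]]] ?].
Qed.

Definition path4_col (i : 'I_4) : 'I_3 :=
  match val i with 1 => Ordinal (isT : 1 < 3) | 3 => Ordinal (isT : 2 < 3)
                 | _ => Ordinal (isT : 0 < 3) end.

Lemma chi_rho_path4 : chi_rho [set: 'I_4] (path_rel 4) = 3.
Proof.
apply/eqP; rewrite eqn_leq; apply/andP; split.
  apply: chi_rho_min; apply/existsP; exists [ffun i => path4_col i].
  apply/packing_colP=> i j _ _ nij; rewrite !ffunE => cij.
  move: nij cij; case: i j => [[|[|[|[|//]]]] ?] [[|[|[|[|//]]]] ?] // _ _;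
    by apply/negP=> /dist_le1P [].
rewrite leqNgt; apply/negP=> chi_lt3.
have /existsP [c c_ok] := chi_rho_colorable [set: 'I_4] (path_rel 4).
pose v k : 'I_4 := inord k.
have c_lt2 i : c i < 2 by apply: leq_trans (ltn_ord (c i)) _; rewrite -ltnS.
(* Colours alternate along the path, and whichever of [v 0], [v 1] gets colour 2 has
   the same colour as the vertex two steps further. *)
have adj k : k < 3 -> c (v k) != c (v k.+1).
  move=> lt_k3; apply: packing_col_adj c_ok _ _ _ _; rewrite ?inE //.
  - by rewrite -(inj_eq val_inj) /= !inordK //; lia.
  - by rewrite /path_rel /= !inordK ?eqxx //; lia.
have far k : k < 2 -> c (v k) = c (v k.+2) -> 0 < c (v k) -> False.
  move=> lt_k2 ck ck_pos; move/packing_colP: c_ok => c_ok.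
  have ne_k : v k != v k.+2 by rewrite -(inj_eq val_inj) /= !inordK //; lia.
  have near_k : dist_le [set: 'I_4] (path_rel 4) (c (v k)).+1 (v k) (v k.+2).
    apply: (dist_le_mono (k := 2)) => //.
    apply: (dist_le_edge2 (w := v k.+1)); rewrite ?inE // /path_rel /= !inordK ?eqxx //; lia.
  by have := c_ok _ _ (in_setT _) (in_setT _) ne_k ck; rewrite near_k.
have alt k : k < 2 -> c (v k) = c (v k.+2).
  move=> lt_k2; apply: val_inj; move: (adj k) (adj k.+1).
  move: (c_lt2 (v k)) (c_lt2 (v k.+1)) (c_lt2 (v k.+2)); rewrite -!(inj_eq val_inj) /=; lia.
have [c0 | c0_pos] := posnP (c (v 0)); last exact: far 0 _ (alt 0 isT) c0_pos.
apply: far 1 _ (alt 1 isT) _ => //.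
by have := adj 0 isT; rewrite -(inj_eq val_inj) /= c0 lt0n eq_sym.
Qed.

Lemma no_path4_in_cycle3 : ~ has_copy (path_rel 4) [set: 'I_3] (cycle_rel 3).
Proof. by case=> g [g_inj _ _]; have := leq_card _ g_inj; rewrite !card_ord. Qed.

Lemma path_rel_odd n (i j : 'I_n) : path_rel n i j -> odd i = ~~ odd j.
Proof. by case/orP=> /eqP <-; rewrite /= ?negbK. Qed.

(* A triangle is an odd cycle, while [path_rel] changes parity along every edge. *)
Lemma no_cycle3_in_path4 : ~ has_copy (cycle_rel 3) [set: 'I_4] (path_rel 4).
Proof.
case=> g [_ _ g_hom].
have odd_g i j : cycle_rel 3 i j -> odd (g i) = ~~ odd (g j) by move/g_hom/path_rel_odd.
have := odd_g (@Ordinal 3 0 isT) (@Ordinal 3 1 isT) isT.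
have := odd_g (@Ordinal 3 1 isT) (@Ordinal 3 2 isT) isT.
have := odd_g (@Ordinal 3 2 isT) (@Ordinal 3 0 isT) isT.
by move=> -> ->; case: odd.
Qed.

Section SmallPackingNumber.
Variables (T : finType) (V : {set T}) (E : rel T).
Hypotheses (E_sym : symmetric E) (E_irr : irreflexive E).

Lemma adj_neq x y : E x y -> x != y.
Proof. by apply: contraTneq => ->; rewrite E_irr. Qed.

Lemma has_copy_tuple n (r : rel 'I_n) (t : n.-tuple T) :
  uniq t -> {subset t <= V} -> (forall i j, r i j -> E (tnth t i) (tnth t j)) ->
  has_copy r V E.
Proof.
by move=> /tuple_uniqP t_inj tV t_hom; exists (tnth t); split=> // i; rewrite tV ?mem_tnth.
Qed.

Lemma complete2_copy u v : u \in V -> v \in V -> E u v -> has_copy (complete_rel 2) V E.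
Proof.
move=> Vu Vv Euv; apply: (@has_copy_tuple _ _ [tuple u; v]).
- by rewrite /= inE adj_neq.
- by apply/allP; rewrite /= Vu Vv.
- by case=> [[|[|//]] ?] [[|[|//]] ?]; rewrite /complete_rel //= E_sym.
Qed.

Lemma cycle3_copy x y z : x \in V -> y \in V -> z \in V ->
  E x y -> E y z -> E z x -> has_copy (cycle_rel 3) V E.
Proof.
move=> Vx Vy Vz Exy Eyz Ezx; apply: (@has_copy_tuple _ _ [tuple x; y; z]).
- by rewrite /= !inE !negb_or !adj_neq // E_sym.
- by apply/allP; rewrite /= Vx Vy Vz.
- by case=> [[|[|[|//]]] ?] [[|[|[|//]]] ?]; rewrite /cycle_rel //= E_sym.
Qed.

Lemma path4_copy a b c d : a \in V -> b \in V -> c \in V -> d \in V ->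
  a != c -> b != d -> a != d -> E a b -> E b c -> E c d -> has_copy (path_rel 4) V E.
Proof.
move=> Va Vb Vc Vd nac nbd nad Eab Ebc Ecd.
apply: (@has_copy_tuple _ _ [tuple a; b; c; d]).
- by rewrite /= !inE !negb_or nac nbd nad !adj_neq.
- by apply/allP; rewrite /= Va Vb Vc Vd.
- by case=> [[|[|[|[|//]]]] ?] [[|[|[|[|//]]]] ?]; rewrite /path_rel //= E_sym.
Qed.

Lemma chi_rho_le1 : ~ has_copy (complete_rel 2) V E -> chi_rho V E <= 1.
Proof.
move=> noK2; apply: chi_rho_min; apply/existsP; exists [ffun=> ord0 : 'I_1].
apply/packing_colP=> u v Vu Vv nuv _; rewrite ffunE.
by apply/negP=> /dist_le1P [/eqP | /(complete2_copy Vu Vv)]; [rewrite (negbTE nuv) | ].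
Qed.

Section StarForest.
Hypotheses (noC3 : ~ has_copy (cycle_rel 3) V E) (noP4 : ~ has_copy (path_rel 4) V E).

Definition branching x := [exists y in V, exists z in V, [&& E x y, E x z & y != z]].

(* Every component is a star; the hubs are the centres, the endpoint of smaller rank
   serving as centre of a single edge.  Hubs get colour 2, the other vertices 1. *)
Definition hub x :=
  branching x || [exists y in V, [&& E x y, ~~ branching y & enum_rank x < enum_rank y]].

Lemma nbranching_nbr_uniq x y z :
  ~~ branching x -> y \in V -> z \in V -> E x y -> E x z -> y = z.
Proof.
move=> nbx Vy Vz Exy Exz; apply/eqP; apply: contraNT nbx => nyz.
by apply/existsP; exists y; rewrite Vy; apply/existsP; exists z; rewrite Vz Exy Exz.
Qed.

Lemma branching_nbr_other x v : branching x -> exists2 y, y \in V & E x y && (y != v).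
Proof.
case/exists_inP=> y Vy /exists_inP [z Vz /and3P [Exy Exz nyz]].
have [eyv | nyv] := eqVneq y v; last by exists y; rewrite ?Exy.
by exists z; rewrite // Exz -eyv eq_sym.
Qed.

Lemma branching_adj x y : x \in V -> y \in V -> E x y -> branching x -> ~~ branching y.
Proof.
move=> Vx Vy Exy /(branching_nbr_other y) [x' Vx' /andP [Exx' nx'y]].
apply/negP=> /(branching_nbr_other x) [y' Vy' /andP [Eyy' ny'x]].
have [ex'y' | nx'y'] := eqVneq x' y'.
  by subst y'; apply: noC3; apply: (cycle3_copy Vx Vy Vx'); rewrite // E_sym.
apply: noP4; apply: (path4_copy Vx' Vx Vy Vy') => //.
- by rewrite eq_sym.
- by rewrite E_sym.
Qed.

Lemma hub_nbranching x y : hub x -> ~~ branching x -> y \in V -> E x y ->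
  ~~ branching y /\ enum_rank x < enum_rank y.
Proof.
case/orP=> [-> // | /exists_inP [y' Vy' /and3P [Exy' nby' lt_xy']]] nbx Vy Exy.
by rewrite -(nbranching_nbr_uniq nbx Vy' Vy Exy' Exy).
Qed.

Lemma hubs_nonadj u v : u \in V -> v \in V -> hub u -> hub v -> ~~ E u v.
Proof.
move=> Vu Vv hu hv; apply/negP=> Euv; have Evu : E v u by rewrite E_sym.
wlog nbu : u v Vu Vv hu hv Euv Evu / ~~ branching u.
  move=> nbranching_case; have [bu | nbu] := boolP (branching u).
    by apply: (nbranching_case v u) => //; apply: branching_adj Vu Vv Euv bu.
  exact: (nbranching_case u v).
have [nbv lt_uv] := hub_nbranching hu nbu Vv Euv.
have [_ lt_vu] := hub_nbranching hv nbv Vu Evu.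
by have := ltn_trans lt_uv lt_vu; rewrite ltnn.
Qed.

Lemma hub_nbr_nbr u w v : u \in V -> w \in V -> v \in V -> hub u -> E u w -> E w v -> v = u.
Proof.
move=> Vu Vw Vv hu Euw Ewv; apply/eqP; apply: contraT => nvu.
have bw : branching w.
  apply/exists_inP; exists u => //; apply/exists_inP; exists v => //.
  by rewrite E_sym Euw Ewv eq_sym.
have nbu : ~~ branching u by rewrite (branching_adj Vw Vu _ bw) // E_sym.
by have [] := hub_nbranching hu nbu Vw Euw; rewrite bw.
Qed.

Lemma nonhubs_nonadj u v : u \in V -> v \in V -> ~~ hub u -> ~~ hub v -> ~~ E u v.
Proof.
move=> Vu Vv; rewrite !negb_or => /andP [nbu /exists_inPn nu] /andP [nbv /exists_inPn nv].
apply/negP=> Euv; have := adj_neq Euv.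
have := nu v Vv; have := nv u Vu; rewrite Euv E_sym Euv nbu nbv /= -!leqNgt => le_vu le_uv.
by rewrite -(inj_eq enum_rank_inj) -(inj_eq val_inj) eqn_leq le_uv le_vu.
Qed.

Lemma chi_rho_le2 : chi_rho V E <= 2.
Proof.
apply: chi_rho_min; apply/existsP; exists [ffun x => if hub x then ord_max else ord0 : 'I_2].
apply/packing_colP=> u v Vu Vv nuv; rewrite !ffunE.
case hu: (hub u); case hv: (hub v) => // _ /=; apply/negP.
  case/dist_le2P=> [/eqP | Euv | [w Vw /andP [Euw Ewv]]]; first by rewrite (negbTE nuv).
    by rewrite (negbTE (hubs_nonadj Vu Vv hu hv)) in Euv.
  by rewrite (hub_nbr_nbr Vu Vw Vv hu Euw Ewv) eqxx in nuv.
case/dist_le1P=> [/eqP | ]; first by rewrite (negbTE nuv).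
by apply/negP; rewrite nonhubs_nonadj ?hu ?hv.
Qed.

End StarForest.

End SmallPackingNumber.

Lemma subgraph_sym (T : finType) (e : rel T) V' E' : is_subgraph e V' E' -> symmetric E'.
Proof. by case. Qed.

Lemma subgraph_irr (T : finType) (e : rel T) V' E' :
  irreflexive e -> is_subgraph e V' E' -> irreflexive E'.
Proof. by move=> e_irr [_ E'e] u; apply/negP=> /E'e/and3P []; rewrite e_irr. Qed.

Theorem proposition3p1 :
  (forall (T : finType) (e : rel T), symmetric e -> irreflexive e ->
     (chi_critical e 2 <-> graph_iso e (complete_rel 2))) /\
  (forall (T : finType) (e : rel T), symmetric e -> irreflexive e ->
     (chi_critical e 3 <->
        graph_iso e (cycle_rel 3) \/ graph_iso e (path_rel 4))).
Proof.
split=> T e e_sym e_irr.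
  have chi_K2 := chi_rho_complete 2.
  split=> [crit | iso].
    have [chi_e _] := crit.
    apply: (critical_copy_iso crit _ (@complete_rel_sym 2)); first by rewrite chi_K2.
    by apply: NNPP => /(chi_rho_le1 e_sym e_irr); rewrite chi_e.
  rewrite -chi_K2; apply: (graph_iso_critical iso) => V' E' sub noK2.
  by rewrite chi_K2 ltnS (chi_rho_le1 (subgraph_sym sub) (subgraph_irr e_irr sub)).
split=> [crit | [iso | iso]].
- have [chi_e _] := crit.
  have [C3 | noC3] := classic (has_copy (cycle_rel 3) [set: T] e).
    by left; apply: (critical_copy_iso crit _ (@cycle_rel_sym 3) C3); rewrite chi_rho_cycle3.
  right; apply: (critical_copy_iso crit _ (@path_rel_sym 4)); first by rewrite chi_rho_path4.
  by apply: NNPP => /(chi_rho_le2 e_sym e_irr noC3); rewrite chi_e.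
- rewrite -chi_rho_cycle3; apply: (graph_iso_critical iso) => V' E' sub noC3.
  rewrite chi_rho_cycle3 ltnS (chi_rho_le2 (subgraph_sym sub) (subgraph_irr e_irr sub)) //.
  by move/(has_copy_subgraph_iso sub iso); apply: no_path4_in_cycle3.
- rewrite -chi_rho_path4; apply: (graph_iso_critical iso) => V' E' sub noP4.
  rewrite chi_rho_path4 ltnS (chi_rho_le2 (subgraph_sym sub) (subgraph_irr e_irr sub)) //.
  by move/(has_copy_subgraph_iso sub iso); apply: no_cycle3_in_path4.
Qed.
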